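(* Let $V$ be a vector space over a field $\mathbb{K}$ and let $F,G$ be two bilinear forms on $V$. Let $\mathrm{Rad}_R(G)=\{w\in V: G(v,w)=0 \text{ for all } v\in V\}$. Then for all $u,v\in\mathcal{T}(V)$ and all $w\in \mathcal{T}(\mathrm{Rad}_R(G))\subseteq\mathcal{T}(V)$, $$\Lambda_F(\Lambda_G(u)(v))(w)=\Lambda_{F+G}(u)\big(\Lambda_F(v)(w)\big).$$
   Context: $\mathcal{T}(V)$ is the tensor algebra of $V$ (product $\otimes$), and $\mathcal{T}(\mathrm{Rad}_R(G))$ is the subalgebra generated by $\mathrm{Rad}_R(G)$. For $x\in V$, $e_x(u)=x\otimes u$. For $f\in V^*$, $i_f$ is the unique linear map on $\mathcal{T}(V)$ with $i_f(1)=0$ and $i_f(x\otimes u)=f(x)u-x\otimes i_f(u)$ ($x\in V$). For a bilinear form $F$ and $x\in V$, $i_x^F:=i_{f_x}$ with $f_x(y)=F(x,y)$. $\Lambda_F:\mathcal{T}(V)\to\mathrm{End}(\mathcal{T}(V))$ is the unique unital algebra homomorphism with $\Lambda_F(x)=e_x+i_x^F$ for $x\in V$. *)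

From HB Require Import structures.
From mathcomp Require Import all_boot all_algebra.
From mathcomp Require Import finmap.
From mathcomp.multinomials Require Import monalg.

Set Implicit Arguments.
Unset Strict Implicit.
Unset Printing Implicit Defensive.
Import GRing.Theory.
Local Open Scope ring_scope.

(* The vector space V comes with a chosen basis indexed by
   I, given as a linear isomorphism phi : V -> {malg K[I]} (finitely
   supported coordinates) with inverse psi.  The tensor algebra T(V) is then
   realised as the free associative algebra on the basis, i.e. the monoid
   algebra {malg K[{fmonom I}]} over the free monoid on I (words). *)

Section TensorAlgebra.
Variables (K : fieldType) (I : choiceType) (V : lmodType K).
Variables (phi : V -> {malg K[I]}) (psi : {malg K[I]} -> V).

Definition TV := {malg K[{fmonom I}]}.

Definition word (s : seq I) : TV := << FMonom s >>.

Definition letter (i : I) : V := psi << i >>.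

Definition iota (x : V) : TV :=
  \sum_(i <- msupp (phi x)) (phi x)@_i *: word [:: i].

Definition ex (x : V) (u : TV) : TV := iota x * u.

Fixpoint iw (f : V -> K) (s : seq I) : TV :=
  match s with
  | [::] => 0
  | i :: s' => f (letter i) *: word s' - word [:: i] * iw f s'
  end.

Definition ins (f : V -> K) (u : TV) : TV :=
  \sum_(m <- msupp u) u@_m *: iw f m.

Definition insF (F : V -> V -> K) (x : V) : TV -> TV := ins (F x).

Definition LamV (F : V -> V -> K) (x : V) (u : TV) : TV :=
  ex x u + insF F x u.

Definition lamw (F : V -> V -> K) (s : seq I) : TV -> TV :=
  foldr (fun i g => fun u => LamV F (letter i) (g u)) id s.

(* Lambda_F : T(V) -> End(T(V)), the unital algebra morphism extending LamV *)
Definition Lam (F : V -> V -> K) (u : TV) (t : TV) : TV :=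
  \sum_(m <- msupp u) u@_m *: lamw F m t.

Definition RadR (G : V -> V -> K) (w : V) : Prop := forall v, G v w = 0.

Inductive TRad (G : V -> V -> K) : TV -> Prop :=
  | TRad_gen w : RadR G w -> TRad G (iota w)
  | TRad_one : TRad G 1
  | TRad_add a b : TRad G a -> TRad G b -> TRad G (a + b)
  | TRad_scale (c : K) a : TRad G a -> TRad G (c *: a)
  | TRad_mul a b : TRad G a -> TRad G b -> TRad G (a * b).

End TensorAlgebra.

Definition addForm (K : fieldType) (V : lmodType K) (F G : V -> V -> K) :
  V -> V -> K := fun x y => F x y + G x y.

From Pilot Require Import Defs.
From HB Require Import structures.
From mathcomp Require Import all_boot all_algebra.
From mathcomp Require Import finmap.
From mathcomp.multinomials Require Import monalg.
Import GRing.Theory.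
Local Open Scope ring_scope.

(* Both sides are linear in u, so by induction on words it suffices to pass
   one generator b_i through: Λ_F(Λ_G(b_i) t)(w) = Λ_{F+G}(b_i)(Λ_F(t)(w)).
   As Λ_G(b_i) t = b_i t + i^G_{b_i} t, this amounts to
   Λ_F(i_g y)(w) = i_g(Λ_F(y)(w)) for g = G(b_i, -).  That identity holds as
   soon as i_g w = 0, because i_g Λ_F(b_j) = g(b_j) - Λ_F(b_j) i_g (interior
   products anticommute with each other and with e_x up to g(x)).  Finally
   i^G_x kills T(Rad_R(G)): it sends a radical vector w to G(x, w) = 0 and
   satisfies i_g(a b) = i_g(a) b whenever i_g(b) = 0. *)

Set Implicit Arguments.
Unset Strict Implicit.
Unset Printing Implicit Defensive.

Section MalgLift.
Variables (R : nzRingType) (M : choiceType) (W : lmodType R).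
Implicit Types (g : M -> W) (u : {malg R[M]}).

Definition malg_lift g u : W := \sum_(m <- msupp u) u@_m *: g m.

Lemma malg_liftEw g u (d : {fset M}) : (msupp u `<=` d)%fset ->
  malg_lift g u = \sum_(m <- d) u@_m *: g m.
Proof.
move=> le_ud; rewrite /malg_lift (big_fset_incl _ le_ud) //= => m _.
by move/mcoeff_outdom->; rewrite scale0r.
Qed.

Lemma malg_lift_is_linear g : linear (malg_lift g).
Proof.
move=> a u v /=; pose d := (msupp u `|` msupp v `|` msupp (a *: u + v))%fset.
have [sub_u sub_v sub_uv] :
    [/\ msupp u `<=` d, msupp v `<=` d & msupp (a *: u + v) `<=` d]%fset.
  split; rewrite /d ?fsubsetUr //.
  - exact: fsubset_trans (fsubsetUl _ _) (fsubsetUl _ _).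
  - exact: fsubset_trans (fsubsetUr _ _) (fsubsetUl _ _).
rewrite (malg_liftEw g sub_u) (malg_liftEw g sub_v) (malg_liftEw g sub_uv).
rewrite scaler_sumr -big_split; apply: eq_bigr => m _ /=.
by rewrite mcoeffD mcoeffZ scalerDl scalerA.
Qed.

HB.instance Definition _ g :=
  GRing.isLinear.Build R {malg R[M]} W *:%R (malg_lift g) (malg_lift_is_linear g).

Lemma malg_liftU g m : malg_lift g << m >> = g m.
Proof. by rewrite /malg_lift msuppU oner_eq0 big_seq_fset1 mcoeffUU scale1r. Qed.

Lemma malgUZ (c : R) m : << c *g m >> = c *: (<< m >> : {malg R[M]}).
Proof. by apply/malgP => k; rewrite mcoeffZ !mcoeffU mulr_natr. Qed.

Lemma linear_malg_eq (h1 h2 : {malg R[M]} -> W) : linear h1 -> linear h2 ->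
  (forall m, h1 << m >> = h2 << m >>) -> h1 =1 h2.
Proof.
move=> lin1 lin2 eq12 u.
pose H1 : {linear _ -> W} := HB.pack h1 (GRing.isLinear.Build R _ W *:%R h1 lin1).
pose H2 : {linear _ -> W} := HB.pack h2 (GRing.isLinear.Build R _ W *:%R h2 lin2).
rewrite -[h1 u]/(H1 u) -[h2 u]/(H2 u) (monalgE u) !linear_sum.
by apply: eq_bigr => m _; rewrite malgUZ !linearZ /= eq12.
Qed.

End MalgLift.

Lemma malg_scalerAr (R : comRingType) (M : monomType) (a x : {malg R[M]}) (c : R) :
  a * (c *: x) = c *: (a * x).
Proof.
apply/malgP => k; rewrite mcoeffZ (mcoeffMlw _ (fsubset_refl _) (msuppZ_le c x)).
rewrite mcoeffMl mulr_sumr; apply: eq_bigr => k1 _.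
rewrite mulr_sumr; apply: eq_bigr => k2 _.
by rewrite mcoeffZ !mulrnAr mulrCA.
Qed.

Lemma malg_mull_linear (R : comRingType) (M : monomType) (a : {malg R[M]}) :
  linear ( *%R a).
Proof. by move=> c x y; rewrite mulrDr malg_scalerAr. Qed.

Section TensorAlgebra.
Variables (K : fieldType) (I : choiceType) (V : lmodType K).
Variables (phi : {linear V -> {malg K[I]}}) (psi : {malg K[I]} -> V).
Hypotheses (phiK : cancel phi psi) (psiK : cancel psi phi).

Local Notation TV := (TV K I).
Local Notation word := (@word K I).
Local Notation letter := (letter psi).
Local Notation iota := (Defs.iota phi).
Local Notation ins := (ins psi).
Local Notation Lam := (Lam phi psi).
Local Notation LamV := (LamV phi psi).

Lemma word_cat s t : word s * word t = word (s ++ t).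
Proof. by rewrite /word malgM_def fgmulUU mulr1 /mmul /= fmmulE. Qed.

Lemma word_nil : word [::] = 1.
Proof. by rewrite /word -fmoneE. Qed.

Lemma word_cons i s : word (i :: s) = word [:: i] * word s.
Proof. by rewrite word_cat. Qed.

Lemma word_fmonom (m : {fmonom I}) : word m = << m >>.
Proof. by rewrite /word fmK. Qed.

Lemma iota_letter i : iota (letter i) = word [:: i].
Proof.
by rewrite /Defs.iota /Defs.letter psiK msuppU oner_eq0 big_seq_fset1 mcoeffUU scale1r.
Qed.

Lemma linear_TV_eq (W : lmodType K) (h1 h2 : TV -> W) : linear h1 -> linear h2 ->
  (forall s, h1 (word s) = h2 (word s)) -> h1 =1 h2.
Proof.
by move=> lin1 lin2 eq12; apply: (linear_malg_eq lin1 lin2) => m; rewrite -!word_fmonom.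
Qed.

Lemma linear_TV_ind (W : lmodType K) (h1 h2 : TV -> W) : linear h1 -> linear h2 ->
  h1 1 = h2 1 ->
  (forall i p, h1 p = h2 p -> h1 (word [:: i] * p) = h2 (word [:: i] * p)) ->
  h1 =1 h2.
Proof.
move=> lin1 lin2 eq1 eq_cons; apply: linear_TV_eq => // s.
by elim: s => [|i s IHs]; rewrite ?word_nil // word_cons eq_cons.
Qed.

Lemma ins_is_linear f : linear (ins f).
Proof. exact: malg_lift_is_linear. Qed.

HB.instance Definition _ f :=
  GRing.isLinear.Build K TV TV *:%R (ins f) (ins_is_linear f).

Lemma ins_word f s : ins f (word s) = iw psi f s.
Proof. exact: (malg_liftU (fun m : {fmonom I} => iw psi f m) (FMonom s)). Qed.

Lemma ins1 f : ins f 1 = 0.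
Proof. by rewrite -word_nil ins_word. Qed.

Lemma ins_consM f i p :
  ins f (word [:: i] * p) = f (letter i) *: p - word [:: i] * ins f p.
Proof.
move: p; apply: linear_TV_eq => [c x y | c x y | s] /=.
- by rewrite malg_mull_linear linearP.
- by rewrite [ins f _]linearP malg_mull_linear scalerDr scalerA mulrC -scalerA
    scalerBr addrACA opprD.
- by rewrite word_cat !ins_word.
Qed.

Lemma ins_addf f g p : ins (fun y => f y + g y) p = ins f p + ins g p.
Proof.
move: p; apply: linear_TV_ind => [c x y | c x y | | i p IHp] /=.
- by rewrite linearP.
- by rewrite !linearP scalerDr addrACA.
- by rewrite !ins1 addr0.
- by rewrite !ins_consM IHp scalerDl mulrDr opprD addrACA.
Qed.

Lemma ins_anticomm f g t : ins g (ins f t) = - ins f (ins g t).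
Proof.
move: t; apply: linear_TV_ind => [c x y | c x y | | i p IHp] /=.
- by rewrite !linearP.
- by rewrite !linearP.
- by rewrite !ins1 !linear0.
rewrite !ins_consM !linearB !linearZ /= !ins_consM IHp mulrN.
by rewrite scalerN !opprK opprD addrCA.
Qed.

Lemma ins_mulr f a b : ins f b = 0 -> ins f (a * b) = ins f a * b.
Proof.
move=> insb0; move: a; apply: linear_TV_ind => [c x y | c x y | | i p IHp] /=.
- by rewrite mulrDl -scalerAl linearP.
- by rewrite linearP mulrDl -scalerAl.
- by rewrite mul1r insb0 ins1 mul0r.
(* Rewriting both sides at once would make Coq compare two products
   [word [:: i] * _] by conversion, which takes very long. *)
rewrite -mulrA [LHS]ins_consM [in X in X = _]IHp ins_consM.
by rewrite mulrBl -scalerAl mulrA.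
Qed.

Lemma ins_iota (g : {scalar V}) y : ins g (iota y) = g y *: 1.
Proof.
have psi_linear : linear psi.
  by move=> c p q; apply: (can_inj phiK); rewrite linearP !psiK.
pose Psi : {linear _ -> V} := HB.pack psi (GRing.isLinear.Build K _ V *:%R psi psi_linear).
have -> : g y = \sum_(j <- msupp (phi y)) (phi y)@_j * g (letter j).
  rewrite -{1}(phiK y) {1}(monalgE (phi y)) -[psi _]/(Psi _) !linear_sum.
  by apply: eq_bigr => j _; rewrite malgUZ !linearZ.
rewrite /Defs.iota linear_sum scaler_suml; apply: eq_bigr => j _.
by rewrite linearZ /= ins_word /= mulr0 subr0 word_nil scalerA.
Qed.

Lemma ins_TRad (G : V -> V -> K) w x :
  scalar (G x) -> TRad phi G w -> ins (G x) w = 0.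
Proof.
move=> Gx_scalar.
pose g : {scalar V} := HB.pack (G x) (GRing.isLinear.Build K V K *%R (G x) Gx_scalar).
elim=> [y Ry | | a b _ insa0 _ insb0 | c a _ insa0 | a b _ insa0 _ insb0].
- by rewrite -[G x]/(g : V -> K) ins_iota /= Ry scale0r.
- exact: ins1.
- by rewrite linearD /= insa0 insb0 addr0.
- by rewrite linearZ /= insa0 scaler0.
- by rewrite ins_mulr // insa0 mul0r.
Qed.

Section LambdaMap.
Variable F : V -> V -> K.

Local Notation lift t := (malg_lift (fun m : {fmonom I} => lamw phi psi F m t)).

Lemma LamDl u v t : Lam F (u + v) t = Lam F u t + Lam F v t.
Proof. exact: (linearD (lift t)). Qed.

Lemma LamZl c u t : Lam F (c *: u) t = c *: Lam F u t.
Proof. exact: (linearZZ (lift t)). Qed.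

Lemma LamBl u v t : Lam F (u - v) t = Lam F u t - Lam F v t.
Proof. exact: (linearB (lift t)). Qed.

Lemma Lam0l t : Lam F 0 t = 0.
Proof. exact: (linear0 (lift t)). Qed.

Lemma Lam_word s t : Lam F (word s) t = lamw phi psi F s t.
Proof. exact: (malg_liftU (fun m : {fmonom I} => lamw phi psi F m t) (FMonom s)). Qed.

Lemma Lam1 t : Lam F 1 t = t.
Proof. by rewrite -word_nil Lam_word. Qed.

Lemma LamV_is_linear x : linear (LamV F x).
Proof.
by move=> c u v; rewrite /LamV /ex /insF [ins _ _]linearP malg_mull_linear scalerDr addrACA.
Qed.

Lemma Lam_consM i p t : Lam F (word [:: i] * p) t = LamV F (letter i) (Lam F p t).
Proof.
move: p; apply: linear_TV_eq => [c x y | c x y | s] /=.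
- by rewrite malg_mull_linear LamDl LamZl.
- by rewrite LamDl LamZl LamV_is_linear.
- by rewrite word_cat !Lam_word.
Qed.

Lemma ins_LamV g i t :
  ins g (LamV F (letter i) t) = g (letter i) *: t - LamV F (letter i) (ins g t).
Proof.
rewrite /LamV /ex /insF iota_letter linearD /= ins_consM.
by rewrite (ins_anticomm (F (letter i)) g) opprD addrA.
Qed.

Lemma Lam_ins g w y : ins g w = 0 -> Lam F (ins g y) w = ins g (Lam F y w).
Proof.
move=> insw0; move: y; apply: linear_TV_ind => [c x y | c x y | | i p IHp] /=.
- by rewrite linearP LamDl LamZl.
- by rewrite LamDl LamZl linearP.
- by rewrite ins1 Lam0l Lam1 insw0.
by rewrite Lam_consM ins_consM LamBl LamZl Lam_consM IHp ins_LamV.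
Qed.

End LambdaMap.

Section Composition.
Variables (F G : V -> V -> K) (w : TV).
Hypothesis insGw : forall x, ins (G x) w = 0.

Lemma Lam_LamV i t :
  Lam F (LamV G (letter i) t) w = LamV (addForm F G) (letter i) (Lam F t w).
Proof.
rewrite {1}/LamV /ex /insF iota_letter LamDl Lam_consM (Lam_ins F t (insGw _)).
by rewrite /LamV /ex /insF ins_addf addrA.
Qed.

Lemma Lam_LamE u v : Lam F (Lam G u v) w = Lam (addForm F G) u (Lam F v w).
Proof.
move: u; apply: linear_TV_ind => [c x y | c x y | | i p IHp] /=.
- by rewrite !LamDl !LamZl.
- by rewrite LamDl LamZl.
- by rewrite !Lam1.
- by rewrite !Lam_consM Lam_LamV IHp.
Qed.

End Composition.

End TensorAlgebra.

Theorem mainTheorem2 (K : fieldType) (I : choiceType) (V : lmodType K)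
  (phi : {linear V -> {malg K[I]}}) (psi : {malg K[I]} -> V)
  (phiK : cancel phi psi) (psiK : cancel psi phi)
  (F G : V -> V -> K)
  (F_linl : forall (a : K) (x y z : V), F (a *: x + y) z = a * F x z + F y z)
  (F_linr : forall (a : K) (x y z : V), F z (a *: x + y) = a * F z x + F z y)
  (G_linl : forall (a : K) (x y z : V), G (a *: x + y) z = a * G x z + G y z)
  (G_linr : forall (a : K) (x y z : V), G z (a *: x + y) = a * G z x + G z y) :
  forall (u v w : TV K I),
    TRad phi G w ->
    Lam phi psi F (Lam phi psi G u v) w
    = Lam phi psi (addForm F G) u (Lam phi psi F v w).
Proof.
move=> u v w Rw; apply: (Lam_LamE psiK F) => x.
have Gx_scalar : scalar (G x) by move=> a y z; exact: G_linr.
exact (ins_TRad phiK psiK Gx_scalar Rw).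
Qed.
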